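(* Let $K$ be a field of characteristic $p$ with $K \neq \mathbb{F}_2$. Then every arithmetic progression $\{a + bt : t \in \mathbb{N}_0\}$ with $a, b \in \mathbb{N}_0$ is a $K$-DML set over split torus.
   Context: For a quasi-projective variety $X$ over $K$, a set $S \subseteq \mathbb{N}_0$ is a $K$-DML set over $X$ if there exist an endomorphism $\Phi$ of $X$ (a morphism $X \to X$ defined over $K$), a point $\alpha \in X(K)$ and a closed subvariety $V \subseteq X$ defined over $K$ (not necessarily irreducible) such that $S = \{ n \in \mathbb{N}_0 : \Phi^n(\alpha) \in V(K)\}$. $S$ is a $K$-DML set over split torus if it is a $K$-DML set over $\mathbb{G}_m^k$ for some $k \in \mathbb{N}$. *)

From HB Require Import structures.
From mathcomp Require Import all_boot all_order all_algebra.
From mathcomp Require Import mpoly.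
Set Implicit Arguments. Unset Strict Implicit. Unset Printing Implicit Defensive.
Import GRing.Theory.
Local Open Scope ring_scope.

(* The coordinate ring is the Laurent polynomial
   ring K[x_1^{+-1},...,x_k^{+-1}]; a Laurent polynomial is represented as
   g / (x_1 ... x_k)^n with g a polynomial. *)

Definition torus_pt (K : fieldType) (k : nat) (x : 'I_k -> K) : Prop :=
  forall i, x i != 0.

Definition laurent (K : fieldType) (k : nat) : Type := ({mpoly K[k]} * nat)%type.

Definition mono_all (K : fieldType) (k : nat) : {mpoly K[k]} := \prod_(i < k) 'X_i.

Definition laurent_eval (K : fieldType) (k : nat) (f : laurent K k) (x : 'I_k -> K) : K :=
  (f.1).@[x] / (\prod_(i < k) x i) ^+ f.2.

Definition laurent_unit (K : fieldType) (k : nat) (f : laurent K k) : Prop :=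
  exists (h : {mpoly K[k]}) (m : nat), f.1 * h = mono_all K k ^+ m.

(* An endomorphism of G_m^k defined over K is given by k coordinate functions
   that are units of the coordinate ring (i.e. regular maps into G_m). *)
Definition torus_endo (K : fieldType) (k : nat) (Phi : 'I_k -> laurent K k) : Prop :=
  forall i, laurent_unit (Phi i).

Definition endo_apply (K : fieldType) (k : nat) (Phi : 'I_k -> laurent K k)
  (x : 'I_k -> K) : 'I_k -> K := fun i => laurent_eval (Phi i) x.

(* K-points of the closed subvariety of G_m^k cut out by a finite family of
   (Laurent, after clearing monomial denominators) polynomials *)
Definition in_closed (K : fieldType) (k : nat) (V : seq {mpoly K[k]}) (x : 'I_k -> K) : Prop :=
  torus_pt x /\ forall P, P \in V -> P.@[x] = 0.

Definition K_DML_torus (K : fieldType) (k : nat) (S : nat -> Prop) : Prop :=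
  exists (Phi : 'I_k -> laurent K k), torus_endo Phi /\
  exists (alpha : 'I_k -> K), torus_pt alpha /\
  exists (V : seq {mpoly K[k]}),
    forall n : nat, S n <-> in_closed V (iter n (endo_apply Phi) alpha).

Definition K_DML_split_torus (K : fieldType) (S : nat -> Prop) : Prop :=
  exists k : nat, (0 < k)%N /\ K_DML_torus K k S.

From HB Require Import structures.
From mathcomp Require Import all_boot all_order all_algebra.
From mathcomp Require Import mpoly.
From mathcomp Require Import zify.
From Stdlib Require Import FunctionalExtensionality.
Set Implicit Arguments. Unset Strict Implicit. Unset Printing Implicit Defensive.
Import GRing.Theory.

(* A self-map F of {0, ..., k-1} induces the monomial endomorphism
   x |-> (prod_(F i = j) x_i)_j of G_m^k, which sends the point with
   coordinate t at c and 1 elsewhere to the same kind of point at F c.  Taking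
   t different from 0 and 1 (possible as K <> F_2), the hyperplane x_T = t
   detects exactly the times at which the F-orbit of c visits T.  Every
   arithmetic progression a + bN is such a set of visiting times, for the
   "rho-shaped" map with a tail of length a and a cycle of length b (for
   b = 0, a tail of length a + 1 and a fixed point). *)

Section RhoMap.

Variables (l p : nat).
Hypothesis p_gt0 : (0 < p)%N.

Definition rho (i : nat) : nat := if (i.+1 < l + p)%N then i.+1 else l.

Lemma rho_lt i : (rho i < l + p)%N.
Proof. by rewrite /rho; case: ifP => //; lia. Qed.

Lemma iter_rho n :
  iter n rho 0 = if (n < l)%N then n else (l + (n - l) %% p)%N.
Proof.
elim: n => [|n IHn] /=; first by case: l => //; rewrite mod0n.
have mod_lt := ltn_pmod (n - l) p_gt0.
rewrite IHn /rho; case: (ltngtP n.+1 l) => [lt_n1l|lt_ln1|<-].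
- by rewrite ifT //; lia.
- rewrite subSn; last lia.
  rewrite -[(n - l).+1]addn1 -modnDml addn1 -addnS ltn_add2l.
  case: ltnP => [mod1_lt|mod1_ge].
  + by rewrite (modn_small mod1_lt).
  + have -> : ((n - l) %% p).+1 = p by lia.
    by rewrite modnn addn0.
- by rewrite subnn mod0n addn0 ifT //; lia.
Qed.

Lemma iter_rho_eq_tail i n : (i < l)%N -> iter n rho 0 = i <-> n = i.
Proof. by move=> lt_il; rewrite iter_rho; case: ifP; lia. Qed.

Lemma iter_rho_eq_entry n :
  iter n rho 0 = l <-> (l <= n)%N /\ (p %| n - l)%N.
Proof.
rewrite iter_rho /dvdn; case: ltnP => [lt_nl|le_ln]; first lia.
by split => [/eqP|[_ /eqP]]; lia.
Qed.

End RhoMap.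

Lemma arith_prog_iter_rho a b n :
  (exists t, n = a + b * t)%N <-> iter n (rho (a + (b == 0)) (maxn 1 b)) 0 = a.
Proof.
case: (posnP b) => [->|b_gt0] /=.
  rewrite addn1 iter_rho_eq_tail ?ltnSn //.
  by split => [[t ->]|->]; [rewrite mul0n addn0 | exists 0%N; rewrite addn0].
rewrite addn0 (maxn_idPr b_gt0) iter_rho_eq_entry //.
split => [[t ->]|[le_an /dvdnP [t Ht]]].
  by rewrite leq_addr addKn dvdn_mulr.
by exists t; rewrite mulnC -Ht subnKC.
Qed.

Local Open Scope ring_scope.

Lemma K_DML_torus_ext (K : fieldType) (k : nat) (S S' : nat -> Prop) :
  (forall n, S n <-> S' n) -> K_DML_torus K k S -> K_DML_torus K k S'.
Proof.
move=> eqSS' [Phi [endoPhi [alpha [alpha_pt [V HV]]]]].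
exists Phi; split => //; exists alpha; split => //; exists V => n.
by rewrite -eqSS'.
Qed.

Section MonomialEndo.

Variables (K : fieldType) (k : nat) (t : K).
Hypotheses (t_neq0 : t != 0) (t_neq1 : t != 1).

Definition coord_endo (F : 'I_k -> 'I_k) : 'I_k -> laurent K k :=
  fun j => (\prod_(i < k | F i == j) 'X_i, 0%N).

Definition delta_pt (c : 'I_k) : 'I_k -> K := fun i => if i == c then t else 1.

Lemma coord_endo_torus_endo F : torus_endo (coord_endo F).
Proof.
move=> j; exists (\prod_(i < k | F i != j) 'X_i), 1%N.
by rewrite expr1 /mono_all [RHS](bigID (fun i => F i == j)).
Qed.

Lemma delta_pt_torus c : torus_pt (delta_pt c).
Proof. by move=> i; rewrite /delta_pt; case: (i == c); rewrite ?oner_neq0. Qed.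

Lemma endo_apply_coord_endo F c :
  endo_apply (coord_endo F) (delta_pt c) = delta_pt (F c).
Proof.
apply: functional_extensionality => j.
rewrite /endo_apply /laurent_eval /= expr0 divr1 rmorph_prod /=.
under eq_bigr => i _ do rewrite mevalXU.
rewrite /delta_pt; case: (eqVneq (F c) j) => [<-|Fc_neq_j].
  by rewrite (bigD1 c) //= eqxx big1 ?mulr1 // => i /andP [_ /negbTE ->].
apply: big1 => i /eqP Fi_j; case: eqVneq => // i_c.
by move: Fc_neq_j; rewrite -i_c Fi_j eqxx.
Qed.

Lemma iter_coord_endo F c n :
  iter n (endo_apply (coord_endo F)) (delta_pt c) = delta_pt (iter n F c).
Proof. by elim: n => [|n IHn] //=; rewrite IHn endo_apply_coord_endo. Qed.

Lemma in_closed_delta_pt T c :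
  in_closed [:: 'X_T - t%:MP] (delta_pt c) <-> c = T.
Proof.
split => [[_ /(_ _ (mem_head _ _))]|->].
  rewrite mevalB mevalXU mevalC /delta_pt; case: eqVneq => [//|_ /eqP].
  by rewrite subr_eq0 eq_sym (negbTE t_neq1).
split; first exact: delta_pt_torus.
move=> P; rewrite inE => /eqP ->.
by rewrite mevalB mevalXU mevalC /delta_pt eqxx subrr.
Qed.

Lemma K_DML_torus_visits (F : 'I_k -> 'I_k) (c T : 'I_k) :
  K_DML_torus K k (fun n => iter n F c = T).
Proof.
exists (coord_endo F); split; first exact: coord_endo_torus_endo.
exists (delta_pt c); split; first exact: delta_pt_torus.
by exists [:: 'X_T - t%:MP] => n; rewrite iter_coord_endo in_closed_delta_pt.
Qed.

Lemma K_DML_torus_nat_visits (f : nat -> nat) (f_lt : forall i, (f i < k)%N)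
    (s T : nat) :
  (s < k)%N -> (T < k)%N -> K_DML_torus K k (fun n => iter n f s = T).
Proof.
move=> lt_sk lt_Tk.
pose F (i : 'I_k) : 'I_k := Ordinal (f_lt i).
have val_iterF n : val (iter n F (Ordinal lt_sk)) = iter n f s.
  by elim: n => [|n IHn] //=; rewrite IHn.
apply: K_DML_torus_ext (K_DML_torus_visits F (Ordinal lt_sk) (Ordinal lt_Tk)).
by move=> n; rewrite -val_iterF; split => [-> //|val_iter_eq]; exact: val_inj.
Qed.

End MonomialEndo.

Theorem lemma2p2 (K : fieldType)
  (hK : exists x : K, (x != 0)%R /\ (x != 1)%R)
  (a b : nat) :
  K_DML_split_torus K (fun n : nat => exists t : nat, n = (a + b * t)%N).
Proof.
case: hK => t [t_neq0 t_neq1].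
set l := (a + (b == 0))%N; set p := maxn 1 b.
have p_gt0 : (0 < p)%N by rewrite leq_maxl.
have lt_a_lp : (a < l + p)%N.
  by rewrite -addnA -[X in (X < _)%N]addn0 ltn_add2l ltn_addl.
have lp_gt0 : (0 < l + p)%N := leq_ltn_trans (leq0n a) lt_a_lp.
exists (l + p)%N; split => //.
apply: K_DML_torus_ext (fun n => iff_sym (arith_prog_iter_rho a b n)) _.
exact: (@K_DML_torus_nat_visits K (l + p) t t_neq0 t_neq1 _ (rho_lt l p_gt0) _ _
  lp_gt0 lt_a_lp).
Qed.
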